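(* Let $1<p<\infty$, $R>0$, $\alpha\in\mathbb{R}\setminus\{0\}$, and let $w$ be a positive smooth function on $[0,R]$ with $w(0)=1$. Let $\bar\lambda_p([0,R],w,\alpha)$ be the first eigenvalue of $$(p-1)|\varphi'|^{p-2}\varphi''+\frac{w'}{w}|\varphi'|^{p-2}\varphi'=-\lambda|\varphi|^{p-2}\varphi,\quad |\varphi'(0)|^{p-2}\varphi'(0)=\alpha|\varphi(0)|^{p-2}\varphi(0),\quad \varphi'(R)=0,$$ and let $u>0$ be a positive first eigenfunction. Then: (1) if $\alpha>0$, then $u'>0$ on $[0,R)$; (2) if $\alpha<0$, then $u'<0$ on $[0,R)$; (3) if $\alpha>0$ and $0<\bar R<R$, then $\bar\lambda_p([0,R],w,\alpha)<\bar\lambda_p([0,\bar R],w,\alpha)$ (where $w$ is restricted to $[0,\bar R]$). Assume in addition that $w$ is strictly log-concave, i.e. $(\log w)''<0$ on $[0,R)$. Then: (4) if $\alpha>0$, then $u'/u$ is monotone decreasing on $[0,R]$, and in particular $|u'/u|^{p-1}\le\alpha$ on $[0,R]$; (5) if $\alpha<0$, then $u'/u$ is monotone increasing on $[0,R]$, and in particular $|u'/u|^{p-1}\le-\alpha$ on $[0,R]$.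
   Context: The first eigenvalue is characterized by $\bar\lambda_p([0,R],w,\alpha)=\inf\{\int_0^R|u'|^pw\,dt+\alpha|u(0)|^p: u\in W^{1,p}([0,R],w\,dt),\ \int_0^R|u|^pw\,dt=1\}$; its eigenfunctions do not change sign. *)

From Stdlib Require Import Reals Lra.
Open Scope R_scope.

(* |x|^q, with the convention 0^q = 0 (q > 0 in all uses). *)
Definition apow (q x : R) : R :=
  if Req_EM_T x 0 then 0 else Rpower (Rabs x) q.

(* |x|^{p-2} x, with value 0 at x = 0. *)
Definition spow (p x : R) : R :=
  if Rlt_dec 0 x then Rpower x (p - 1)
  else if Rlt_dec x 0 then - Rpower (- x) (p - 1) else 0.

Definition deriv_on (a b : R) (f f' : R -> R) : Prop :=
  forall x, a <= x <= b ->
  forall eps, 0 < eps -> exists delta, 0 < delta /\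
    forall y, a <= y <= b -> y <> x -> Rabs (y - x) < delta ->
      Rabs ((f y - f x) / (y - x) - f' x) < eps.

Definition cont_on (a b : R) (f : R -> R) : Prop :=
  forall x, a <= x <= b ->
  forall eps, 0 < eps -> exists delta, 0 < delta /\
    forall y, a <= y <= b -> Rabs (y - x) < delta -> Rabs (f y - f x) < eps.

Definition smooth_with (w : R -> R) (D : nat -> R -> R) : Prop :=
  D 0%nat = w /\ forall n x, derivable_pt_lim (D n) x (D (S n) x).

(* Values of the Rayleigh functional
   int_0^R0 |u'|^p w dt + alpha |u(0)|^p  over normalized test functions
   u (taken C^1 on [0,R0], a dense class in W^{1,p}([0,R0], w dt)). *)
Definition rq_set (p R0 : R) (w : R -> R) (alpha : R) (E : R) : Prop :=
  exists u du : R -> R,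
    deriv_on 0 R0 u du /\ cont_on 0 R0 du /\
    exists (pr1 : Riemann_integrable (fun t => apow p (du t) * w t) 0 R0)
           (pr2 : Riemann_integrable (fun t => apow p (u t) * w t) 0 R0),
      RiemannInt pr2 = 1 /\ E = RiemannInt pr1 + alpha * apow p (u 0).

Definition is_inf (S : R -> Prop) (m : R) : Prop :=
  (forall x, S x -> m <= x) /\
  (forall m', (forall x, S x -> m' <= x) -> m' <= m).

Definition first_eigenvalue (p R0 : R) (w : R -> R) (alpha lam : R) : Prop :=
  is_inf (rq_set p R0 w alpha) lam.

(* u (with derivative du) solves, on [0,R0],
   (w |u'|^{p-2} u')' = -lam w |u|^{p-2} u   (divergence form of
   (p-1)|u'|^{p-2}u'' + (w'/w)|u'|^{p-2}u' = -lam |u|^{p-2}u),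
   |u'(0)|^{p-2}u'(0) = alpha |u(0)|^{p-2}u(0),  u'(R0) = 0. *)
Definition eigenfunction (p R0 : R) (w : R -> R) (alpha lam : R)
    (u du : R -> R) : Prop :=
  deriv_on 0 R0 u du /\
  deriv_on 0 R0 (fun t => w t * spow p (du t))
                (fun t => - lam * w t * spow p (u t)) /\
  spow p (du 0) = alpha * spow p (u 0) /\
  du R0 = 0.

(* The flux [w |u'|^(p-2) u'] has derivative [-lam w u^(p-1)],
   vanishes at [R0] and equals [alpha u(0)^(p-1)] at [0]; hence [lam] has the
   sign of [alpha] and [u'] keeps that sign on [0,R0) (claims 1 and 2).
   The variable [z = |u'/u|^(p-2) u'/u] solves the Riccati equation
   [z' = -lam - (w'/w) z - (p-1) |z|^(p/(p-1))] with [z(0) = alpha] and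
   [z(R0) = 0].  At a critical point of [z] this gives [z'' = -(log w)'' z],
   so for strictly log-concave [w] the function [sign(alpha) z'] can only
   cross zero upwards; being [-|lam| < 0] at [R0], it is nonpositive, and
   [z] is monotone between [alpha] and [0] (claims 4 and 5).
   For claim 3, [z] is bounded below by a positive constant on [0,Rb] when
   [Rb < R0], so [z - delta exp (A t)] is a positive supersolution of the
   Riccati equation for the eigenvalue [lam + delta]; Picone's identity then
   bounds the Rayleigh quotient of every test function on [0,Rb] from below
   by [lam + delta]. *)

From Stdlib Require Import Reals Lra.
From Coquelicot Require Import Coquelicot.
Open Scope R_scope.

(** * Calculus on a closed interval *)

Definition clamp (a b x : R) : R := Rmax a (Rmin b x).

Lemma clamp_id a b x : a <= x <= b -> clamp a b x = x.
Proof. intros. unfold clamp, Rmax, Rmin. repeat destruct Rle_dec; lra. Qed.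

Lemma clamp_mem a b x : a <= b -> a <= clamp a b x <= b.
Proof. intros. unfold clamp, Rmax, Rmin. repeat destruct Rle_dec; lra. Qed.

Lemma clamp_left a b x : a <= b -> x <= a -> clamp a b x = a.
Proof. intros. unfold clamp, Rmax, Rmin. repeat destruct Rle_dec; lra. Qed.

Lemma clamp_right a b x : a <= b -> b <= x -> clamp a b x = b.
Proof. intros. unfold clamp, Rmax, Rmin. repeat destruct Rle_dec; lra. Qed.

Lemma clamp_lipschitz a b x y :
  a <= b -> Rabs (clamp a b y - clamp a b x) <= Rabs (y - x).
Proof.
  intros. unfold clamp, Rmax, Rmin.
  repeat destruct Rle_dec; unfold Rabs; repeat destruct Rcase_abs; lra.
Qed.

(* Outside [a,b], [f] is continued by its tangent lines at the end points,
   which turns one-sided derivatives into two-sided ones. *)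
Definition tangent_ext (a b : R) (f f' : R -> R) (x : R) : R :=
  f (clamp a b x) + f' (clamp a b x) * (x - clamp a b x).

Lemma tangent_ext_id a b f f' x : a <= x <= b -> tangent_ext a b f f' x = f x.
Proof. intros. unfold tangent_ext. rewrite clamp_id by lra. ring. Qed.

Lemma derivable_pt_lim_tangent_ext a b f f' x :
  a < b -> deriv_on a b f f' -> a <= x <= b ->
  derivable_pt_lim (tangent_ext a b f f') x (f' x).
Proof.
  intros Hab Hd Hx eps Heps.
  destruct (Hd x Hx eps Heps) as [d0 [Hd0 Hd1]].
  (* from an interior point, steps shorter than [dl] and [dr] stay in [a,b] *)
  assert (exists dl, 0 < dl /\ (a < x -> dl <= x - a)) as [dl [Hdl Hxl]]
    by (destruct (Rlt_dec a x); [exists (x - a) | exists 1]; lra).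
  assert (exists dr, 0 < dr /\ (x < b -> dr <= b - x)) as [dr [Hdr Hxr]]
    by (destruct (Rlt_dec x b); [exists (b - x) | exists 1]; lra).
  assert (Hpos : 0 < Rmin d0 (Rmin dl dr)) by (repeat apply Rmin_glb_lt; assumption).
  exists (mkposreal _ Hpos); simpl; intros h Hh0 Hh.
  assert (Hh1 := Rle_lt_trans _ _ _ (Rle_abs h) Hh).
  assert (Hh2 := Rle_lt_trans _ _ _ (Rle_abs (- h)) ltac:(rewrite Rabs_Ropp; exact Hh)).
  assert (Hm0 := Rmin_l d0 (Rmin dl dr)).
  assert (Hml := Rle_trans _ _ _ (Rmin_r d0 _) (Rmin_l dl dr)).
  assert (Hmr := Rle_trans _ _ _ (Rmin_r d0 _) (Rmin_r dl dr)).
  rewrite (tangent_ext_id a b f f' x) by lra.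
  destruct (Rlt_dec (x + h) a) as [Hl|Hl]; [|destruct (Rlt_dec b (x + h)) as [Hr|Hr]].
  - assert (x = a) as -> by (destruct (Rlt_dec a x) as [Hax|]; [specialize (Hxl Hax)|]; lra).
    unfold tangent_ext; rewrite clamp_left by lra.
    replace ((f a + f' a * (a + h - a) - f a) / h - f' a) with 0 by (field; auto).
    rewrite Rabs_R0; lra.
  - assert (x = b) as -> by (destruct (Rlt_dec x b) as [Hxb|]; [specialize (Hxr Hxb)|]; lra).
    unfold tangent_ext; rewrite clamp_right by lra.
    replace ((f b + f' b * (b + h - b) - f b) / h - f' b) with 0 by (field; auto).
    rewrite Rabs_R0; lra.
  - rewrite tangent_ext_id by lra.
    replace h with (x + h - x) at 2 by ring.
    apply Hd1; try lra. replace (x + h - x) with h by ring. lra.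
Qed.

Lemma deriv_on_of_derivable a b f F f' :
  (forall x, a <= x <= b -> derivable_pt_lim F x (f' x)) ->
  (forall x, a <= x <= b -> F x = f x) -> deriv_on a b f f'.
Proof.
  intros HF Heq x Hx eps Heps.
  destruct (HF x Hx eps Heps) as [d Hd].
  exists d; split; [apply cond_pos|]; intros y Hy Hyx Hyd.
  specialize (Hd (y - x)). replace (x + (y - x)) with y in Hd by ring.
  rewrite <- (Heq y Hy), <- (Heq x Hx). apply Hd; lra.
Qed.

Lemma deriv_on_ext a b f g f' g' :
  (forall x, a <= x <= b -> f x = g x) -> (forall x, a <= x <= b -> f' x = g' x) ->
  deriv_on a b f f' -> deriv_on a b g g'.
Proof.
  intros Hfg Hfg' Hd x Hx eps Heps.
  destruct (Hd x Hx eps Heps) as [d [Hd0 Hd1]].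
  exists d; split; auto; intros y Hy Hyx Hyd.
  rewrite <- !Hfg, <- Hfg' by auto. auto.
Qed.

Lemma deriv_on_sub a b a' b' f f' :
  a <= a' -> b' <= b -> deriv_on a b f f' -> deriv_on a' b' f f'.
Proof.
  intros Ha Hb Hf x Hx eps Heps.
  destruct (Hf x ltac:(lra) eps Heps) as [d [Hd Hd1]].
  exists d; split; auto; intros y Hy. apply Hd1; lra.
Qed.

Lemma derivable_pt_lim_eq f x l l' :
  derivable_pt_lim f x l -> l = l' -> derivable_pt_lim f x l'.
Proof. now intros H <-. Qed.

Section IntervalCalculus.

Variables a b : R.
Hypothesis Hab : a < b.

Lemma deriv_on_const c : deriv_on a b (fun _ => c) (fun _ => 0).
Proof.
  apply (deriv_on_of_derivable _ _ _ (fun _ => c)); auto.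
  intros; apply derivable_pt_lim_const.
Qed.

Lemma deriv_on_minus f f' g g' : deriv_on a b f f' -> deriv_on a b g g' ->
  deriv_on a b (fun t => f t - g t) (fun t => f' t - g' t).
Proof.
  intros Hf Hg.
  apply (deriv_on_of_derivable _ _ _
    (fun t => tangent_ext a b f f' t - tangent_ext a b g g' t)).
  - intros x Hx. apply (derivable_pt_lim_minus (tangent_ext a b f f') (tangent_ext a b g g'));
      apply derivable_pt_lim_tangent_ext; auto.
  - intros x Hx. rewrite !tangent_ext_id; auto.
Qed.

Lemma deriv_on_mult f f' g g' : deriv_on a b f f' -> deriv_on a b g g' ->
  deriv_on a b (fun t => f t * g t) (fun t => f' t * g t + f t * g' t).
Proof.
  intros Hf Hg.
  apply (deriv_on_of_derivable _ _ _
    (fun t => tangent_ext a b f f' t * tangent_ext a b g g' t)).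
  - intros x Hx. eapply derivable_pt_lim_eq.
    + apply (derivable_pt_lim_mult (tangent_ext a b f f') (tangent_ext a b g g'));
        apply derivable_pt_lim_tangent_ext; auto.
    + rewrite !tangent_ext_id; auto.
  - intros x Hx. rewrite !tangent_ext_id; auto.
Qed.

Lemma deriv_on_scal c f f' : deriv_on a b f f' ->
  deriv_on a b (fun t => c * f t) (fun t => c * f' t).
Proof.
  intros Hf. eapply deriv_on_ext; [| |apply (deriv_on_mult _ _ _ _ (deriv_on_const c) Hf)];
    intros; simpl; ring.
Qed.

Lemma deriv_on_div f f' g g' : deriv_on a b f f' -> deriv_on a b g g' ->
  (forall x, a <= x <= b -> g x <> 0) ->
  deriv_on a b (fun t => f t / g t) (fun t => (f' t * g t - f t * g' t) / (g t) ^ 2).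
Proof.
  intros Hf Hg Hg0.
  apply (deriv_on_of_derivable _ _ _
    (fun t => tangent_ext a b f f' t / tangent_ext a b g g' t)).
  - intros x Hx. eapply derivable_pt_lim_eq.
    + apply (derivable_pt_lim_div (tangent_ext a b f f') (tangent_ext a b g g'));
        try apply derivable_pt_lim_tangent_ext; auto.
      rewrite tangent_ext_id; auto.
    + rewrite !tangent_ext_id by auto. unfold Rsqr. simpl. field. auto.
  - intros x Hx. rewrite !tangent_ext_id; auto.
Qed.

Lemma deriv_on_comp h f f' h' : deriv_on a b f f' ->
  (forall x, a <= x <= b -> derivable_pt_lim h (f x) (h' x)) ->
  deriv_on a b (fun t => h (f t)) (fun t => h' t * f' t).
Proof.
  intros Hf Hh.
  apply (deriv_on_of_derivable _ _ _ (fun t => h (tangent_ext a b f f' t))).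
  - intros x Hx. eapply derivable_pt_lim_eq.
    + apply (derivable_pt_lim_comp (tangent_ext a b f f') h).
      * apply derivable_pt_lim_tangent_ext; auto.
      * rewrite tangent_ext_id; auto.
    + ring.
  - intros x Hx. rewrite !tangent_ext_id; auto.
Qed.

Lemma deriv_on_cont f f' : deriv_on a b f f' -> cont_on a b f.
Proof.
  intros Hf x Hx eps Heps.
  destruct (derivable_continuous_pt _ _
    (exist _ _ (derivable_pt_lim_tangent_ext a b f f' x Hab Hf Hx)) eps Heps)
    as [d [Hd Hd1]].
  exists d; split; auto; intros y Hy Hyd.
  rewrite <- (tangent_ext_id a b f f' y), <- (tangent_ext_id a b f f' x) by auto.
  destruct (Req_dec y x) as [->|]; [rewrite Rminus_diag, Rabs_R0; lra|].
  apply (Hd1 y). repeat split; auto.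
Qed.

Lemma deriv_on_MVT f f' s t : deriv_on a b f f' -> a <= s < t -> t <= b ->
  exists c, s < c < t /\ f t - f s = f' c * (t - s).
Proof.
  intros Hf Hs Ht.
  destruct (MVT_cor2 (tangent_ext a b f f') f' s t) as [c [Hc Hct]]; [lra| |].
  - intros c Hc. apply derivable_pt_lim_tangent_ext; auto; lra.
  - exists c. rewrite !tangent_ext_id in Hc by lra. auto.
Qed.

Lemma deriv_on_incr f f' : deriv_on a b f f' ->
  (forall x, a <= x <= b -> 0 <= f' x) ->
  forall s t, a <= s -> s <= t -> t <= b -> f s <= f t.
Proof.
  intros Hf Hpos s t Hs Hst Ht.
  destruct (Req_dec s t) as [->|]; [lra|].
  destruct (deriv_on_MVT f f' s t) as [c [Hc Hfc]]; auto; try lra.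
  assert (0 <= f' c) by (apply Hpos; lra). nra.
Qed.

Lemma deriv_on_strict_incr f f' : deriv_on a b f f' ->
  (forall x, a <= x <= b -> 0 < f' x) ->
  forall s t, a <= s -> s < t -> t <= b -> f s < f t.
Proof.
  intros Hf Hpos s t Hs Hst Ht.
  destruct (deriv_on_MVT f f' s t) as [c [Hc Hfc]]; auto; try lra.
  assert (0 < f' c) by (apply Hpos; lra). nra.
Qed.

End IntervalCalculus.

Lemma continuity_pt_clamp a b g x :
  a <= b -> cont_on a b g -> continuity_pt (fun t => g (clamp a b t)) x.
Proof.
  intros Hab Hg eps Heps.
  destruct (Hg (clamp a b x) (clamp_mem a b x Hab) eps Heps) as [d [Hd Hd1]].
  exists d; split; auto; intros y [_ Hy]; simpl in *; unfold R_dist in *.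
  apply Hd1; [apply clamp_mem; auto|].
  eapply Rle_lt_trans; [apply clamp_lipschitz|]; auto.
Qed.

Lemma cont_on_of_continuity a b f F :
  (forall x, a <= x <= b -> continuity_pt F x) ->
  (forall x, a <= x <= b -> F x = f x) -> cont_on a b f.
Proof.
  intros HF Heq x Hx eps Heps.
  destruct (HF x Hx eps Heps) as [d [Hd Hd1]].
  exists d; split; auto; intros y Hy Hyd.
  rewrite <- (Heq y Hy), <- (Heq x Hx).
  destruct (Req_dec y x) as [->|]; [rewrite Rminus_diag, Rabs_R0; lra|].
  apply (Hd1 y). repeat split; auto.
Qed.

Section IntervalContinuity.

Variables a b : R.
Hypothesis Hab : a <= b.

Lemma cont_on_const c : cont_on a b (fun _ => c).
Proof.
  apply (cont_on_of_continuity _ _ _ (fun _ => c)); auto.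
  intros; apply continuity_pt_const; intros ??; auto.
Qed.

Lemma cont_on_plus f g : cont_on a b f -> cont_on a b g ->
  cont_on a b (fun t => f t + g t).
Proof.
  intros Hf Hg.
  apply (cont_on_of_continuity _ _ _ (fun t => f (clamp a b t) + g (clamp a b t))).
  - intros x _. apply continuity_pt_plus; apply continuity_pt_clamp; auto.
  - intros x Hx. rewrite clamp_id; auto.
Qed.

Lemma cont_on_mult f g : cont_on a b f -> cont_on a b g ->
  cont_on a b (fun t => f t * g t).
Proof.
  intros Hf Hg.
  apply (cont_on_of_continuity _ _ _ (fun t => f (clamp a b t) * g (clamp a b t))).
  - intros x _. apply continuity_pt_mult; apply continuity_pt_clamp; auto.
  - intros x Hx. rewrite clamp_id; auto.
Qed.

Lemma cont_on_comp h f : cont_on a b f ->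
  (forall x, a <= x <= b -> continuity_pt h (f x)) -> cont_on a b (fun t => h (f t)).
Proof.
  intros Hf Hh.
  apply (cont_on_of_continuity _ _ _ (fun t => h (f (clamp a b t)))).
  - intros x Hx. apply (continuity_pt_comp (fun t => f (clamp a b t)) h).
    + apply continuity_pt_clamp; auto.
    + rewrite clamp_id; auto.
  - intros x Hx. rewrite clamp_id; auto.
Qed.

Lemma cont_on_min f : cont_on a b f ->
  exists m, a <= m <= b /\ forall t, a <= t <= b -> f m <= f t.
Proof.
  intros Hf.
  destruct (continuity_ab_min (fun t => f (clamp a b t)) a b) as [m [Hm Hmab]]; auto.
  - intros; apply continuity_pt_clamp; auto.
  - exists m; split; auto. intros t Ht.
    specialize (Hm t Ht). rewrite !clamp_id in Hm; auto.
Qed.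

Lemma cont_on_max f : cont_on a b f ->
  exists m, a <= m <= b /\ forall t, a <= t <= b -> f t <= f m.
Proof.
  intros Hf.
  destruct (continuity_ab_maj (fun t => f (clamp a b t)) a b) as [m [Hm Hmab]]; auto.
  - intros; apply continuity_pt_clamp; auto.
  - exists m; split; auto. intros t Ht.
    specialize (Hm t Ht). rewrite !clamp_id in Hm; auto.
Qed.

End IntervalContinuity.

Lemma deriv_on_pos_right a b y y' m :
  deriv_on a b y y' -> cont_on a b y -> a <= m < b -> 0 <= y m ->
  (y m = 0 -> 0 < y' m) -> exists s, m < s <= b /\ 0 < y s.
Proof.
  intros Hd Hc Hm Hym Hzero.
  assert (exists d, 0 < d /\ forall s, m < s <= b -> s - m < d -> 0 < y s)
    as [d [Hd0 Hd1]].
  { destruct (Req_dec (y m) 0) as [H0|H0].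
    - destruct (Hd m ltac:(lra) (y' m) (Hzero H0)) as [d [Hd0 Hd1]].
      exists d; split; auto; intros s Hs Hsd.
      assert (Hq := Hd1 s ltac:(lra) ltac:(lra) ltac:(rewrite Rabs_right; lra)).
      rewrite H0 in Hq. apply Rabs_def2 in Hq.
      replace (y s) with ((y s - 0) / (s - m) * (s - m)) by (field; lra).
      apply Rmult_lt_0_compat; lra.
    - destruct (Hc m ltac:(lra) (y m) ltac:(lra)) as [d [Hd0 Hd1]].
      exists d; split; auto; intros s Hs Hsd.
      assert (Hq := Hd1 s ltac:(lra) ltac:(rewrite Rabs_right; lra)).
      apply Rabs_def2 in Hq. lra. }
  assert (Hmin : 0 < Rmin d (b - m)) by (apply Rmin_glb_lt; lra).
  assert (Hd' := Rmin_l d (b - m)). assert (Hbm := Rmin_r d (b - m)).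
  exists (m + Rmin d (b - m) / 2). split; [lra|]. apply Hd1; lra.
Qed.

Lemma deriv_on_nonpos_of_upcrossings a b y y' :
  a < b -> deriv_on a b y y' -> y b < 0 ->
  (forall t, a <= t < b -> y t = 0 -> 0 < y' t) ->
  forall t, a <= t <= b -> y t <= 0.
Proof.
  intros Hab Hd Hb Hz t1 Ht1.
  destruct (Rle_dec (y t1) 0) as [|Hpos]; auto. exfalso.
  assert (Hc := deriv_on_cont a b Hab y y' Hd).
  set (E := fun t => t1 <= t <= b /\ 0 <= y t).
  destruct (completeness E) as [m [Hub Hlub]].
  { exists b. intros x [Hx _]. lra. }
  { exists t1. split; lra. }
  assert (Ht1m : t1 <= m) by (apply Hub; split; lra).
  assert (Hmb : m <= b) by (apply Hlub; intros x [Hx _]; lra).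
  assert (Hym : 0 <= y m).
  { destruct (Rle_dec 0 (y m)) as [|Hn]; auto. exfalso.
    destruct (Hc m ltac:(lra) (- y m) ltac:(lra)) as [d [Hd0 Hd1]].
    enough (m <= m - d) by lra.
    apply Hlub. intros e [He1 He2].
    assert (e <= m) by (apply Hub; split; auto).
    destruct (Rle_dec e (m - d)); auto.
    assert (Hq := Hd1 e ltac:(lra) ltac:(rewrite Rabs_left1; lra)).
    apply Rabs_def2 in Hq. lra. }
  assert (Hmb' : m < b) by (destruct (Req_dec m b) as [->|]; lra).
  destruct (deriv_on_pos_right a b y y' m Hd Hc ltac:(lra) Hym
              (Hz m ltac:(lra))) as [s [Hs Hys]].
  assert (s <= m) by (apply Hub; split; lra). lra.
Qed.

Lemma deriv_on_RInt a b f :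
  a < b -> cont_on a b f -> deriv_on a b (RInt (fun t => f (clamp a b t)) a) f.
Proof.
  intros Hab Hf. set (fc := fun t => f (clamp a b t)).
  assert (Hc : forall t, continuous fc t).
  { intros t. apply continuity_pt_filterlim, continuity_pt_clamp; auto; lra. }
  apply (deriv_on_of_derivable _ _ _ (RInt fc a)); auto.
  intros x Hx. replace (f x) with (fc x) by (unfold fc; rewrite clamp_id; auto).
  apply is_derive_Reals, (is_derive_RInt fc (RInt fc a) a x); auto.
  apply filter_forall. intros y. apply (@RInt_correct R_CompleteNormedModule).
  apply (@ex_RInt_continuous R_CompleteNormedModule). auto.
Qed.

Lemma deriv_on_le_RiemannInt a b f H H' (pr : Riemann_integrable f a b) :
  a < b -> cont_on a b f -> deriv_on a b H H' ->
  (forall x, a <= x <= b -> H' x <= f x) -> H b - H a <= RiemannInt pr.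
Proof.
  intros Hab Hf HH Hle.
  set (fc := fun t => f (clamp a b t)).
  assert (HK := deriv_on_minus a b Hab _ _ _ _ (deriv_on_RInt a b f Hab Hf) HH).
  assert (Hincr := deriv_on_incr a b Hab _ _ HK
    ltac:(intros x Hx; specialize (Hle x Hx); lra) a b ltac:(lra) ltac:(lra) ltac:(lra)).
  simpl in Hincr. rewrite RInt_point in Hincr.
  rewrite <- (RInt_Reals f a b pr), (RInt_ext f fc).
  - unfold zero in Hincr; simpl in Hincr. fold fc in Hincr. lra.
  - intros x Hx. unfold fc. rewrite clamp_id; auto.
    rewrite Rmin_left, Rmax_right in Hx; lra.
Qed.

(** * Signed powers *)

Lemma Rpower_pos x q : 0 < Rpower x q.
Proof. apply exp_pos. Qed.

Lemma Rpower_pred x q : 0 < x -> Rpower x q = Rpower x (q - 1) * x.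
Proof.
  intros. rewrite <- (Rpower_1 x) at 3 by auto. rewrite <- Rpower_plus. f_equal; ring.
Qed.

Lemma Rpower_div x y q : 0 < x -> 0 < y -> Rpower (x / y) q = Rpower x q / Rpower y q.
Proof.
  intros. unfold Rpower, Rdiv. rewrite ln_mult, ln_Rinv, <- exp_Ropp, <- exp_plus
    by auto using Rinv_0_lt_compat.
  f_equal; ring.
Qed.

Lemma apow_of_pos q x : 0 < x -> apow q x = Rpower x q.
Proof. intros. unfold apow. destruct Req_EM_T; [lra|]. rewrite Rabs_right; lra. Qed.

Lemma apow_of_neg q x : x < 0 -> apow q x = Rpower (- x) q.
Proof. intros. unfold apow. destruct Req_EM_T; [lra|]. rewrite Rabs_left; lra. Qed.

Lemma apow_0 q : apow q 0 = 0.
Proof. unfold apow. destruct Req_EM_T; lra. Qed.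

Lemma apow_ge0 q x : 0 <= apow q x.
Proof. unfold apow. destruct Req_EM_T; [lra|]. left; apply Rpower_pos. Qed.

Lemma apow_pos q x : x <> 0 -> 0 < apow q x.
Proof. intros. unfold apow. destruct Req_EM_T; [contradiction|]. apply Rpower_pos. Qed.

Lemma spow_of_pos p x : 0 < x -> spow p x = Rpower x (p - 1).
Proof. intros. unfold spow. destruct Rlt_dec; lra. Qed.

Lemma spow_of_neg p x : x < 0 -> spow p x = - Rpower (- x) (p - 1).
Proof. intros. unfold spow. destruct Rlt_dec; [lra|]. destruct Rlt_dec; lra. Qed.

Lemma spow_0 p : spow p 0 = 0.
Proof. unfold spow. repeat destruct Rlt_dec; lra. Qed.

Lemma spow_mul_id p x : spow p x * x = apow p x.
Proof.
  destruct (Rtotal_order x 0) as [H|[->|H]].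
  - rewrite spow_of_neg, apow_of_neg, (Rpower_pred (- x) p) by lra. ring.
  - rewrite spow_0, apow_0. ring.
  - rewrite spow_of_pos, apow_of_pos, (Rpower_pred x p) by lra. ring.
Qed.

Lemma spow_div p x y : 0 < y -> spow p (x / y) = spow p x / Rpower y (p - 1).
Proof.
  intros Hy. destruct (Rtotal_order x 0) as [H|[->|H]].
  - assert (x / y < 0) by (apply Rdiv_neg_pos; auto).
    rewrite !spow_of_neg by auto. replace (- (x / y)) with (- x / y) by (field; lra).
    rewrite Rpower_div by lra. field. apply Rgt_not_eq, Rpower_pos.
  - unfold Rdiv. rewrite Rmult_0_l, spow_0. ring.
  - rewrite !spow_of_pos by (auto; apply Rdiv_lt_0_compat; auto). apply Rpower_div; auto.
Qed.

Lemma apow_div p x y : 0 < y -> apow p (x / y) = apow p x / Rpower y p.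
Proof.
  intros Hy. destruct (Rtotal_order x 0) as [H|[->|H]].
  - rewrite !apow_of_neg by (auto; apply Rdiv_neg_pos; auto).
    replace (- (x / y)) with (- x / y) by (field; lra). apply Rpower_div; lra.
  - unfold Rdiv. rewrite Rmult_0_l, apow_0. ring.
  - rewrite !apow_of_pos by (auto; apply Rdiv_lt_0_compat; auto). apply Rpower_div; auto.
Qed.

Lemma apow_mult q x y : apow q (x * y) = apow q x * apow q y.
Proof.
  unfold apow. destruct (Req_EM_T x 0) as [->|Hx]; [destruct Req_EM_T; [ring|lra]|].
  destruct (Req_EM_T y 0) as [->|Hy]; [destruct Req_EM_T; [ring|lra]|].
  destruct Req_EM_T as [Hxy|].
  - destruct (Rmult_integral _ _ Hxy); contradiction.
  - rewrite Rabs_mult, Rpower_mult_distr; auto; apply Rabs_pos_lt; auto.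
Qed.

Lemma apow_le q x y : 0 < q -> 0 <= x <= y -> apow q x <= apow q y.
Proof.
  intros Hq [[Hx|<-] Hxy].
  - rewrite !apow_of_pos by lra. apply Rle_Rpower_l; lra.
  - rewrite apow_0. apply apow_ge0.
Qed.

Lemma abs_spow p x : Rabs (spow p x) = apow (p - 1) x.
Proof.
  destruct (Rtotal_order x 0) as [H|[->|H]].
  - rewrite spow_of_neg, apow_of_neg, Rabs_Ropp by auto.
    apply Rabs_right, Rle_ge, Rlt_le, Rpower_pos.
  - rewrite spow_0, apow_0. apply Rabs_R0.
  - rewrite spow_of_pos, apow_of_pos by auto.
    apply Rabs_right, Rle_ge, Rlt_le, Rpower_pos.
Qed.

Lemma spow_lt p x y : 1 < p -> x < y -> spow p x < spow p y.
Proof.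
  intros Hp Hxy.
  assert (Hpos := Rpower_pos (- x) (p - 1)). assert (Hpos' := Rpower_pos y (p - 1)).
  destruct (Rtotal_order x 0) as [Hx|[->|Hx]]; destruct (Rtotal_order y 0) as [Hy|[->|Hy]];
    try lra; rewrite ?spow_0, ?spow_of_neg, ?spow_of_pos by auto;
    first [lra | apply Ropp_lt_contravar, Rlt_Rpower_l; lra | apply Rlt_Rpower_l; lra].
Qed.

Lemma spow_le_reg p x y : 1 < p -> spow p x <= spow p y -> x <= y.
Proof.
  intros Hp H. destruct (Rle_dec x y) as [|Hyx]; auto.
  assert (spow p y < spow p x) by (apply spow_lt; lra). lra.
Qed.

(* [spow p] preserves signs: [x * spow p x = |x|^p] is positive for [x <> 0]. *)
Lemma Rmult_spow_pos p s x : 0 < s * spow p x <-> 0 < s * x.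
Proof.
  assert (Hx0 : x <> 0 -> 0 < spow p x * x).
  { intros Hx. rewrite spow_mul_id. apply apow_pos; auto. }
  destruct (Req_dec x 0) as [->|Hx]; [rewrite spow_0, !Rmult_0_r; lra|].
  specialize (Hx0 Hx). split; intros H; nra.
Qed.

Lemma Rmult_spow_le_reg p s x y : 1 < p -> s * spow p x <= s * spow p y -> s * x <= s * y.
Proof.
  intros Hp H. destruct (Rtotal_order s 0) as [Hs|[->|Hs]]; [| lra |].
  - apply Rmult_le_compat_neg_l; [lra|].
    apply (spow_le_reg p); auto. apply (Rmult_le_reg_l (- s)); lra.
  - apply Rmult_le_compat_l; [lra|].
    apply (spow_le_reg p); auto. apply (Rmult_le_reg_l s); lra.
Qed.

Definition conj_exp (p : R) : R := p / (p - 1).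

Lemma conj_exp_gt1 p : 1 < p -> 1 < conj_exp p.
Proof.
  intros Hp. unfold conj_exp. apply (Rmult_lt_reg_r (p - 1)); [lra|].
  field_simplify; lra.
Qed.

Lemma apow_conj_exp_spow p x : 1 < p -> apow (conj_exp p) (spow p x) = apow p x.
Proof.
  intros Hp. unfold conj_exp.
  destruct (Rtotal_order x 0) as [H|[->|H]].
  - assert (Hpos := Rpower_pos (- x) (p - 1)).
    rewrite spow_of_neg, apow_of_neg, (apow_of_neg p x), Ropp_involutive, Rpower_mult by lra.
    f_equal. field. lra.
  - rewrite spow_0, !apow_0. auto.
  - rewrite spow_of_pos, !apow_of_pos, Rpower_mult by (auto; apply Rpower_pos).
    f_equal. field. lra.
Qed.

Lemma derivable_pt_lim_apow p x : 1 < p -> derivable_pt_lim (apow p) x (p * spow p x).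
Proof.
  intros Hp. destruct (Rtotal_order x 0) as [H|[->|H]].
  - apply (derivable_pt_lim_locally_ext (fun y => Rpower (- y) p) _ x (x - 1) 0);
      [lra|intros; symmetry; apply apow_of_neg; lra|].
    rewrite spow_of_neg by auto.
    replace (p * - Rpower (- x) (p - 1)) with (p * Rpower (- x) (p - 1) * - (1)) by ring.
    apply (derivable_pt_lim_comp (fun y => - y) (fun y => Rpower y p)).
    + apply derivable_pt_lim_opp, derivable_pt_lim_id.
    + apply derivable_pt_lim_power. lra.
  - rewrite spow_0, Rmult_0_r. intros eps Heps.
    (* |h|^p / |h| = |h|^(p-1) < eps as soon as |h| < eps^(1/(p-1)) *)
    exists (mkposreal _ (Rpower_pos eps (/ (p - 1)))); simpl; intros h Hh0 Hh.
    rewrite Rplus_0_l, apow_0, !Rminus_0_r. unfold Rdiv.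
    rewrite Rabs_mult, Rabs_inv, (Rabs_right (apow p h)) by (apply Rle_ge, apow_ge0).
    assert (Ha : 0 < Rabs h) by (apply Rabs_pos_lt; auto).
    replace (apow p h * / Rabs h) with (Rpower (Rabs h) (p - 1)).
    2: { unfold apow. destruct Req_EM_T; [contradiction|].
         rewrite (Rpower_pred (Rabs h) p) by auto. field. lra. }
    replace eps with (Rpower (Rpower eps (/ (p - 1))) (p - 1)).
    + apply Rlt_Rpower_l; [lra|]. split; auto.
    + rewrite Rpower_mult. replace (/ (p - 1) * (p - 1)) with 1 by (field; lra).
      apply Rpower_1; auto.
  - apply (derivable_pt_lim_locally_ext (fun y => Rpower y p) _ x 0 (x + 1));
      [lra|intros; symmetry; apply apow_of_pos; lra|].
    rewrite spow_of_pos by auto. apply derivable_pt_lim_power. lra.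
Qed.

Lemma continuity_pt_apow p x : 1 < p -> continuity_pt (apow p) x.
Proof.
  intros Hp. apply (derivable_continuous_pt _ _ (exist _ _ (derivable_pt_lim_apow p x Hp))).
Qed.

Lemma exp_le x y : x <= y -> exp x <= exp y.
Proof. intros [H| ->]; [left; apply exp_increasing; auto | lra]. Qed.

Lemma derivable_pt_lim_exp_scal A x :
  derivable_pt_lim (fun t => exp (A * t)) x (exp (A * x) * A).
Proof.
  apply (derivable_pt_lim_eq _ _ (exp (A * x) * (A * 1))); [|ring].
  apply (derivable_pt_lim_comp (fun t => A * t) exp), derivable_pt_lim_exp.
  apply derivable_pt_lim_scal, derivable_pt_lim_id.
Qed.

Lemma exp_convex th x y : 0 <= th <= 1 ->
  exp (th * x + (1 - th) * y) <= th * exp x + (1 - th) * exp y.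
Proof.
  intros Hth. set (c := th * x + (1 - th) * y).
  (* compare both exponentials with the tangent line of exp at c *)
  assert (Hx : exp x = exp c * exp (x - c)) by (rewrite <- exp_plus; f_equal; ring).
  assert (Hy : exp y = exp c * exp (y - c)) by (rewrite <- exp_plus; f_equal; ring).
  assert (Hc := exp_pos c).
  assert (H1 : exp c * (1 + (x - c)) <= exp c * exp (x - c))
    by (apply Rmult_le_compat_l; [lra|apply exp_ineq1_le]).
  assert (H2 : exp c * (1 + (y - c)) <= exp c * exp (y - c))
    by (apply Rmult_le_compat_l; [lra|apply exp_ineq1_le]).
  assert (th * (exp c * (1 + (x - c))) + (1 - th) * (exp c * (1 + (y - c))) = exp c)
    by (unfold c; ring).
  rewrite Hx, Hy. nra.
Qed.

Lemma young p m y : 1 < p ->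
  p * m * y <= apow p y + (p - 1) * apow (conj_exp p) m.
Proof.
  intros Hp. set (q := conj_exp p).
  assert (H0 := apow_ge0 p y). assert (H1 := apow_ge0 q m).
  destruct (Req_dec m 0) as [->|Hm]; [nra|].
  destruct (Req_dec y 0) as [->|Hy]; [nra|].
  assert (Hmy : m * y <= Rabs m * Rabs y) by (rewrite <- Rabs_mult; apply Rle_abs).
  assert (Hm' : 0 < Rabs m) by (apply Rabs_pos_lt; auto).
  assert (Hy' : 0 < Rabs y) by (apply Rabs_pos_lt; auto).
  assert (Hpq : / q = 1 - / p) by (unfold q, conj_exp; field; lra).
  assert (Hth : 0 <= / p <= 1).
  { split; [left; apply Rinv_0_lt_compat; lra|].
    rewrite <- Rinv_1. left. apply Rinv_lt_contravar; lra. }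
  (* weighted AM-GM, i.e. convexity of exp at ln |y|^p and ln |m|^q *)
  assert (Habs : Rabs m * Rabs y <= / p * apow p y + / q * apow q m).
  { unfold apow. do 2 (destruct Req_EM_T; [contradiction|]). unfold Rpower.
    replace (Rabs m * Rabs y)
      with (exp (/ p * (p * ln (Rabs y)) + (1 - / p) * (q * ln (Rabs m)))).
    - rewrite Hpq. apply exp_convex; auto.
    - rewrite <- Hpq. replace (/ p * (p * ln (Rabs y)) + / q * (q * ln (Rabs m)))
        with (ln (Rabs y) + ln (Rabs m)) by (unfold q, conj_exp; field; lra).
      rewrite exp_plus, !exp_ln by auto. ring. }
  replace (apow p y + (p - 1) * apow q m) with (p * (/ p * apow p y + / q * apow q m))
    by (unfold q, conj_exp; field; lra).
  rewrite Rmult_assoc. apply Rmult_le_compat_l; lra.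
Qed.

(** * Lower bounds for the Rayleigh quotient *)

(* Picone's inequality, pointwise: Young's inequality for the cross term
   [(k |v|^(p-2) v) v'] and the supersolution property of [k]. *)
Lemma picone_le p W dW k dk mu v dv : 1 < p -> 0 < W ->
  dk + dW / W * k + (p - 1) * apow (conj_exp p) k + mu <= 0 ->
  (dW * k + W * dk) * apow p v + W * k * (p * spow p v * dv)
    <= apow p dv * W + - mu * (apow p v * W).
Proof.
  intros Hp HW Hk.
  assert (HY := young p (k * spow p v) dv Hp).
  rewrite apow_mult, apow_conj_exp_spow in HY by auto.
  assert (HV := apow_ge0 p v).
  assert (Hk' : (dk * W + dW * k + W * ((p - 1) * apow (conj_exp p) k + mu)) * apow p v <= 0).
  { apply Rmult_le_0_r; auto.
    replace (dk * W + dW * k + W * ((p - 1) * apow (conj_exp p) k + mu))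
      with (W * (dk + dW / W * k + (p - 1) * apow (conj_exp p) k + mu)) by (field; lra).
    apply Rmult_le_0_l; lra. }
  assert (HWY := Rmult_le_compat_l W _ _ (Rlt_le _ _ HW) HY).
  nra.
Qed.

(* Integrate [picone_le] for [H = w k |v|^p]: [H Rb >= 0], and the boundary
   term [H 0 = k 0 |v 0|^p] is absorbed by [alpha |v 0|^p]. *)
Lemma first_eigenvalue_ge_of_riccati_supersolution p Rb w dw alpha k dk mu lamb :
  1 < p -> 0 < Rb -> deriv_on 0 Rb w dw -> (forall t, 0 <= t <= Rb -> 0 < w t) ->
  w 0 = 1 -> deriv_on 0 Rb k dk -> 0 <= k Rb -> k 0 <= alpha ->
  (forall t, 0 <= t <= Rb ->
     dk t + dw t / w t * k t + (p - 1) * apow (conj_exp p) (k t) + mu <= 0) ->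
  first_eigenvalue p Rb w alpha lamb -> mu <= lamb.
Proof.
  intros Hp HRb Hw Hwpos Hw0 Hk HkRb Hk0 Hsuper [_ Hglb].
  apply Hglb. intros E [v [dv [Hv [Hdv [pr1 [pr2 [Hnorm ->]]]]]]].
  assert (Hwc := deriv_on_cont 0 Rb HRb w dw Hw).
  assert (Happ : forall g, cont_on 0 Rb g -> cont_on 0 Rb (fun t => apow p (g t)))
    by (intros g Hg; apply cont_on_comp; try lra; auto; intros; apply continuity_pt_apow; auto).
  set (H := fun t => w t * k t * apow p (v t)).
  assert (HH : deriv_on 0 Rb H (fun t => (dw t * k t + w t * dk t) * apow p (v t)
                                         + w t * k t * (p * spow p (v t) * dv t))).
  { apply deriv_on_mult; auto. apply deriv_on_mult; auto.
    apply deriv_on_comp; auto. intros; apply derivable_pt_lim_apow; auto. }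
  set (pr := RiemannInt_P10 (- mu) pr1 pr2).
  assert (Hvc := deriv_on_cont 0 Rb HRb v dv Hv).
  assert (Hf : cont_on 0 Rb (fun t => apow p (dv t) * w t + - mu * (apow p (v t) * w t))).
  { apply cont_on_plus; [lra| |]; repeat apply cont_on_mult; try lra;
      auto using cont_on_const. }
  assert (Hint := deriv_on_le_RiemannInt 0 Rb _ H _ pr HRb Hf HH
    ltac:(intros; apply picone_le; auto)).
  rewrite (RiemannInt_P13 pr1 pr2), Hnorm in Hint.
  assert (HRb' : 0 <= H Rb).
  { assert (0 < w Rb) by (apply Hwpos; lra). assert (HV := apow_ge0 p (v Rb)).
    unfold H. apply Rmult_le_pos; [apply Rmult_le_pos|]; lra. }
  assert (H0 : H 0 = k 0 * apow p (v 0)) by (unfold H; rewrite Hw0; ring).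
  assert (HV0 := apow_ge0 p (v 0)).
  nra.
Qed.

(** * The Riccati equation *)

(* [b] plays the role of [w'/w]. *)
Definition riccati_rhs (p lam b z : R) : R :=
  - lam - b * z - (p - 1) * apow (conj_exp p) z.

(* At a zero of [z'], differentiating the equation leaves [z'' = - b' z]. *)
Lemma riccati_antitone p lam R0 b db z s :
  1 < p -> 0 < R0 -> deriv_on 0 R0 b db ->
  deriv_on 0 R0 z (fun t => riccati_rhs p lam (b t) (z t)) ->
  z R0 = 0 -> 0 < s * lam ->
  (forall t, 0 <= t < R0 -> db t < 0) -> (forall t, 0 <= t < R0 -> 0 < s * z t) ->
  forall t0 t1, 0 <= t0 <= t1 -> t1 <= R0 -> s * z t1 <= s * z t0.
Proof.
  intros Hp HR Hb Hz HzR Hlam Hdb Hsz.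
  set (Y := fun t => riccati_rhs p lam (b t) (z t)).
  assert (HY : deriv_on 0 R0 (fun t => s * Y t) (fun t => s * ((0 - (db t * z t + b t * Y t))
              - (p - 1) * (conj_exp p * spow (conj_exp p) (z t) * Y t)))).
  { apply deriv_on_scal; auto. apply deriv_on_minus; auto.
    - apply deriv_on_minus, deriv_on_mult; auto using deriv_on_const.
    - apply deriv_on_scal, deriv_on_comp; auto.
      intros; apply derivable_pt_lim_apow, conj_exp_gt1; auto. }
  assert (HsY : forall t, 0 <= t <= R0 -> s * Y t <= 0).
  { apply (deriv_on_nonpos_of_upcrossings 0 R0 _ _ HR HY).
    - unfold Y, riccati_rhs. rewrite HzR, apow_0. lra.
    - intros t Ht HY0.
      assert (HYt : Y t = 0) by (destruct (Rmult_integral _ _ HY0); [nra|auto]).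
      rewrite HYt. specialize (Hdb t Ht). specialize (Hsz t Ht). nra. }
  intros t0 t1 Ht0 Ht1.
  assert (Hmono := deriv_on_incr 0 R0 HR _ _ (deriv_on_scal 0 R0 HR (- s) _ _ Hz)
    ltac:(intros x Hx; specialize (HsY x Hx); unfold Y in HsY; lra)
    t0 t1 ltac:(lra) ltac:(lra) ltac:(lra)).
  lra.
Qed.

(* Lowering a positive solution [z] by [delta e] with [e = exp (A t)] turns it
   into a strict supersolution with eigenvalue raised by [delta], provided the
   drift [A] dominates [- b]. *)
Lemma riccati_rhs_shift_supersolution p lam b z A e delta :
  1 < p -> 0 <= delta -> 0 <= delta * e <= z -> 1 <= e * (A + b) ->
  (riccati_rhs p lam b z - delta * (e * A)) + b * (z - delta * e)
    + (p - 1) * apow (conj_exp p) (z - delta * e) + (lam + delta) <= 0.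
Proof.
  intros Hp Hdelta Hk Hdrift.
  assert (Hq : apow (conj_exp p) (z - delta * e) <= apow (conj_exp p) z)
    by (apply apow_le; [generalize (conj_exp_gt1 p Hp); lra | lra]).
  unfold riccati_rhs. nra.
Qed.

(** * The first eigenfunction *)

Section FirstEigenfunction.

Variables (p R0 alpha lam : R) (w : R -> R) (D : nat -> R -> R) (u du : R -> R).
Hypothesis hp : 1 < p.
Hypothesis hR : 0 < R0.
Hypothesis hw : smooth_with w D.
Hypothesis hwpos : forall t, 0 <= t <= R0 -> 0 < w t.
Hypothesis hw0 : w 0 = 1.
Hypothesis hu : eigenfunction p R0 w alpha lam u du.
Hypothesis hupos : forall t, 0 <= t <= R0 -> 0 < u t.

Lemma derivable_pt_lim_weight x : derivable_pt_lim w x (D 1%nat x).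
Proof. destruct hw as [<- HD]. apply HD. Qed.

Lemma deriv_on_log_weight :
  deriv_on 0 R0 (fun t => D 1%nat t / w t) (fun t => D 2%nat t / w t - (D 1%nat t / w t) ^ 2).
Proof.
  assert (Hw0 : forall x, 0 <= x <= R0 -> w x <> 0) by (intros; apply Rgt_not_eq, hwpos; auto).
  assert (Hdiv := deriv_on_div 0 R0 hR (D 1%nat) (D 2%nat) w (D 1%nat)
    (deriv_on_of_derivable _ _ _ _ _ (fun x _ => proj2 hw 1%nat x) (fun _ _ => eq_refl))
    (deriv_on_of_derivable _ _ _ _ _ (fun x _ => derivable_pt_lim_weight x) (fun _ _ => eq_refl))
    Hw0).
  apply (deriv_on_ext _ _ _ _ _ _ (fun _ _ => eq_refl)) with (2 := Hdiv).
  intros x Hx. simpl. field. auto.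
Qed.

Lemma spow_eigenfunction t : 0 <= t <= R0 -> spow p (u t) = Rpower (u t) (p - 1).
Proof. intros. apply spow_of_pos, hupos; auto. Qed.

Lemma eigenfunction_deriv_sign s :
  0 < s * alpha -> 0 < s * lam /\ forall t, 0 <= t < R0 -> 0 < s * du t.
Proof.
  intros Ha. destruct hu as [_ [Hflux [Hbc HduR]]].
  set (G := fun t => - s * (w t * spow p (du t))).
  assert (HG : deriv_on 0 R0 G (fun t => - s * (- lam * w t * spow p (u t))))
    by (apply deriv_on_scal; auto).
  assert (HG0 : G 0 = - (s * alpha) * Rpower (u 0) (p - 1)).
  { unfold G. rewrite hw0, Hbc, spow_eigenfunction by lra. ring. }
  assert (HGR : G R0 = 0) by (unfold G; rewrite HduR, spow_0; ring).
  assert (Hu0 := Rpower_pos (u 0) (p - 1)).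
  assert (Hdiff : forall x, 0 <= x <= R0 ->
    - s * (- lam * w x * spow p (u x)) = s * lam * (w x * Rpower (u x) (p - 1))).
  { intros. rewrite spow_eigenfunction; auto. ring. }
  assert (Hwu : forall x, 0 <= x <= R0 -> 0 < w x * Rpower (u x) (p - 1))
    by (intros; apply Rmult_lt_0_compat; auto using Rpower_pos).
  assert (Hlam : 0 < s * lam).
  { destruct (Rlt_dec 0 (s * lam)) as [|Hn]; auto. exfalso.
    assert (Hdecr := deriv_on_incr 0 R0 hR _ _ (deriv_on_scal 0 R0 hR (-1) _ _ HG)
      ltac:(intros x Hx; cbv beta; rewrite Hdiff by auto; specialize (Hwu x Hx); nra)
      0 R0 ltac:(lra) ltac:(lra) ltac:(lra)).
    nra. }
  split; auto. intros t Ht.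
  assert (HGt := deriv_on_strict_incr 0 R0 hR _ _ HG
    ltac:(intros x Hx; cbv beta; rewrite Hdiff by auto; specialize (Hwu x Hx); nra)
    t R0 ltac:(lra) ltac:(lra) ltac:(lra)).
  assert (Hwt : 0 < w t) by (apply hwpos; lra).
  rewrite HGR in HGt. unfold G in HGt. apply (Rmult_spow_pos p). nra.
Qed.

Definition riccati_var (t : R) : R := spow p (du t) / Rpower (u t) (p - 1).

Lemma riccati_var_spow t : 0 <= t <= R0 -> riccati_var t = spow p (du t / u t).
Proof. intros. unfold riccati_var. rewrite spow_div; auto. Qed.

Lemma riccati_var_0 : riccati_var 0 = alpha.
Proof.
  destruct hu as [_ [_ [Hbc _]]]. unfold riccati_var.
  rewrite Hbc, spow_eigenfunction by lra. field. apply Rgt_not_eq, Rpower_pos.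
Qed.

Lemma riccati_var_R0 : riccati_var R0 = 0.
Proof. destruct hu as [_ [_ [_ HduR]]]. unfold riccati_var. rewrite HduR, spow_0. field.
  apply Rgt_not_eq, Rpower_pos. Qed.

Lemma apow_conj_exp_div_Rpower d y : 0 < y ->
  apow (conj_exp p) (spow p d / Rpower y (p - 1)) = spow p d * d / (Rpower y (p - 1 - 1) * y * y).
Proof.
  intros Hy. rewrite <- spow_div, apow_conj_exp_spow, apow_div, <- spow_mul_id by auto.
  rewrite (Rpower_pred y p), (Rpower_pred y (p - 1)) by auto. reflexivity.
Qed.

Lemma deriv_on_riccati_var :
  deriv_on 0 R0 riccati_var (fun t => riccati_rhs p lam (D 1%nat t / w t) (riccati_var t)).
Proof.
  destruct hu as [_ [Hflux _]].
  assert (Hw : deriv_on 0 R0 w (D 1%nat)).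
  { apply (deriv_on_of_derivable _ _ _ w); auto using derivable_pt_lim_weight. }
  assert (HU : deriv_on 0 R0 (fun t => Rpower (u t) (p - 1))
                 (fun t => (p - 1) * Rpower (u t) (p - 1 - 1) * du t)).
  { apply (deriv_on_comp 0 R0 hR (fun y => Rpower y (p - 1)) u du
      (fun t => (p - 1) * Rpower (u t) (p - 1 - 1))); [exact (proj1 hu)|]. intros x Hx. apply derivable_pt_lim_power, hupos; auto. }
  assert (Hquot := deriv_on_div 0 R0 hR _ _ _ _ Hflux (deriv_on_mult 0 R0 hR _ _ _ _ Hw HU)
    ltac:(intros x Hx; apply Rgt_not_eq, Rmult_lt_0_compat; auto using Rpower_pos)).
  refine (deriv_on_ext _ _ _ _ _ _ _ _ Hquot); intros x Hx;
    assert (Hux := hupos x Hx); assert (Hwx := hwpos x Hx); cbv beta.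
  - assert (HUx := Rpower_pos (u x) (p - 1)). unfold riccati_var. field. lra.
  - assert (HU2 := Rpower_pos (u x) (p - 1 - 1)). unfold riccati_rhs, riccati_var.
    rewrite apow_conj_exp_div_Rpower, spow_eigenfunction, (Rpower_pred (u x) (p - 1)) by auto.
    field. repeat split; lra.
Qed.

Lemma riccati_var_pos s : 0 < s * alpha -> forall t, 0 <= t < R0 -> 0 < s * riccati_var t.
Proof.
  intros Ha t Ht. unfold riccati_var, Rdiv. rewrite <- Rmult_assoc.
  apply Rmult_lt_0_compat; [|apply Rinv_0_lt_compat, Rpower_pos].
  apply Rmult_spow_pos, (proj2 (eigenfunction_deriv_sign s Ha)); auto.
Qed.

Section LogConcave.

Hypothesis hlc : forall t, 0 <= t < R0 -> D 2%nat t / w t - (D 1%nat t / w t) ^ 2 < 0.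

Lemma riccati_var_antitone s : 0 < s * alpha ->
  forall t0 t1, 0 <= t0 <= t1 -> t1 <= R0 -> s * riccati_var t1 <= s * riccati_var t0.
Proof.
  intros Ha. apply (riccati_antitone p lam R0 (fun t => D 1%nat t / w t)
    (fun t => D 2%nat t / w t - (D 1%nat t / w t) ^ 2)); auto using deriv_on_log_weight,
    deriv_on_riccati_var, riccati_var_R0, riccati_var_pos.
  exact (proj1 (eigenfunction_deriv_sign s Ha)).
Qed.

Lemma ratio_antitone s : 0 < s * alpha ->
  forall t0 t1, 0 <= t0 <= t1 -> t1 <= R0 -> s * (du t1 / u t1) <= s * (du t0 / u t0).
Proof.
  intros Ha t0 t1 Ht0 Ht1. apply (Rmult_spow_le_reg p); auto.
  rewrite <- !riccati_var_spow by lra. apply riccati_var_antitone; auto.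
Qed.

Lemma ratio_pow_le s : 0 < s * alpha ->
  forall t, 0 <= t <= R0 -> apow (p - 1) (du t / u t) <= Rabs alpha.
Proof.
  intros Ha t Ht. rewrite <- abs_spow, <- riccati_var_spow by auto.
  assert (Hup := riccati_var_antitone s Ha 0 t ltac:(lra) ltac:(lra)).
  assert (Hlow := riccati_var_antitone s Ha t R0 ltac:(lra) ltac:(lra)).
  rewrite riccati_var_0 in Hup. rewrite riccati_var_R0, Rmult_0_r in Hlow.
  assert (Hs : 0 < Rabs s) by (apply Rabs_pos_lt; intros ->; lra).
  apply (Rmult_le_reg_l (Rabs s)); auto.
  rewrite <- !Rabs_mult, !Rabs_right; lra.
Qed.

End LogConcave.

Lemma riccati_var_lower_bound Rb : 0 < alpha -> 0 < Rb < R0 ->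
  exists m, 0 < m /\ forall t, 0 <= t <= Rb -> m <= riccati_var t.
Proof.
  intros Ha HRb.
  assert (Hpos : forall t, 0 <= t <= Rb -> 0 < riccati_var t).
  { intros t Ht. generalize (riccati_var_pos 1 ltac:(lra) t ltac:(lra)). lra. }
  destruct (cont_on_min 0 Rb ltac:(lra) riccati_var (deriv_on_cont 0 Rb ltac:(lra) _ _
    (deriv_on_sub 0 R0 0 Rb _ _ ltac:(lra) ltac:(lra) deriv_on_riccati_var))) as [m [Hm Hmin]].
  exists (riccati_var m). auto.
Qed.

Lemma log_weight_bound Rb : 0 < Rb <= R0 ->
  exists M, forall t, 0 <= t <= Rb -> Rabs (D 1%nat t / w t) <= M.
Proof.
  intros HRb.
  destruct (cont_on_max 0 Rb ltac:(lra) (fun t => Rabs (D 1%nat t / w t))) as [m [_ Hmax]].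
  - apply cont_on_comp; [lra| |intros; apply Rcontinuity_abs].
    apply (deriv_on_cont 0 Rb ltac:(lra) _ _
      (deriv_on_sub 0 R0 0 Rb _ _ ltac:(lra) ltac:(lra) deriv_on_log_weight)).
  - exists (Rabs (D 1%nat m / w m)). auto.
Qed.

Lemma first_eigenvalue_lt_of_subinterval : 0 < alpha ->
  forall Rb lamb, 0 < Rb < R0 -> first_eigenvalue p Rb w alpha lamb -> lam < lamb.
Proof.
  intros Ha Rb lamb HRb Hlamb.
  destruct (riccati_var_lower_bound Rb Ha HRb) as [m [Hm Hmin]].
  destruct (log_weight_bound Rb ltac:(lra)) as [M HM].
  set (b := fun t => D 1%nat t / w t).
  set (A := Rabs M + 1).
  assert (HA : 1 <= A) by (unfold A; generalize (Rabs_pos M); lra).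
  assert (HeRb := exp_pos (A * Rb)).
  set (delta := m / (2 * exp (A * Rb))).
  assert (Hdelta : 0 < delta) by (apply Rdiv_lt_0_compat; lra).
  assert (HdeltaRb : delta * exp (A * Rb) = m / 2) by (unfold delta; field; lra).
  apply Rlt_le_trans with (lam + delta); [lra|].
  apply (first_eigenvalue_ge_of_riccati_supersolution p Rb w (D 1%nat) alpha
    (fun t => riccati_var t - delta * exp (A * t))
    (fun t => riccati_rhs p lam (b t) (riccati_var t) - delta * (exp (A * t) * A))); auto; try lra.
  - apply (deriv_on_of_derivable _ _ _ w); auto using derivable_pt_lim_weight.
  - intros; apply hwpos; lra.
  - apply deriv_on_minus; [lra| |].
    + apply (deriv_on_sub 0 R0); try lra. apply deriv_on_riccati_var.
    + apply deriv_on_scal; [lra|].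
      apply (deriv_on_of_derivable _ _ _ (fun t => exp (A * t))); auto.
      intros; apply derivable_pt_lim_exp_scal.
  - generalize (Hmin Rb ltac:(lra)). lra.
  - rewrite riccati_var_0, Rmult_0_r, exp_0. lra.
  - intros t Ht. apply riccati_rhs_shift_supersolution; auto; try lra.
    + assert (exp (A * t) <= exp (A * Rb)) by (apply exp_le, Rmult_le_compat_l; lra).
      generalize (Hmin t Ht) (exp_pos (A * t)). nra.
    + assert (1 <= exp (A * t)) by (rewrite <- exp_0; apply exp_le, Rmult_le_pos; lra).
      assert (1 <= A + b t).
      { generalize (HM t Ht) (Rle_abs (- b t)) (Rle_abs M). rewrite Rabs_Ropp.
        unfold A, b. lra. }
      change (D 1%nat t / w t) with (b t). nra.
Qed.

End FirstEigenfunction.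

Theorem proposition2p1
  (p R0 alpha : R) (w : R -> R) (D : nat -> R -> R) (lam : R) (u du : R -> R)
  (hp : 1 < p) (hR : 0 < R0) (halpha : alpha <> 0)
  (hw : smooth_with w D) (hwpos : forall t, 0 <= t <= R0 -> 0 < w t)
  (hw0 : w 0 = 1)
  (hlam : first_eigenvalue p R0 w alpha lam)
  (hu : eigenfunction p R0 w alpha lam u du)
  (hupos : forall t, 0 <= t <= R0 -> 0 < u t) :
  (0 < alpha -> forall t, 0 <= t < R0 -> 0 < du t) /\
  (alpha < 0 -> forall t, 0 <= t < R0 -> du t < 0) /\
  (0 < alpha -> forall Rb lamb, 0 < Rb < R0 ->
     first_eigenvalue p Rb w alpha lamb -> lam < lamb) /\
  ((forall t, 0 <= t < R0 -> D 2%nat t / w t - (D 1%nat t / w t) ^ 2 < 0) ->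
     (0 < alpha ->
        (forall s t, 0 <= s <= t -> t <= R0 -> du t / u t <= du s / u s) /\
        (forall t, 0 <= t <= R0 -> apow (p - 1) (du t / u t) <= alpha)) /\
     (alpha < 0 ->
        (forall s t, 0 <= s <= t -> t <= R0 -> du s / u s <= du t / u t) /\
        (forall t, 0 <= t <= R0 -> apow (p - 1) (du t / u t) <= - alpha))).
Proof.
  assert (Hsign := eigenfunction_deriv_sign p R0 alpha lam w u du hR hwpos hw0 hu hupos).
  split; [|split; [|split]].
  - intros Ha t Ht. generalize (proj2 (Hsign 1 ltac:(lra)) t Ht). lra.
  - intros Ha t Ht. generalize (proj2 (Hsign (-1) ltac:(lra)) t Ht). lra.
  - exact (first_eigenvalue_lt_of_subinterval p R0 alpha lam w D u du
             hp hR hw hwpos hw0 hu hupos).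
  - intros hlc.
    assert (Hratio := ratio_antitone p R0 alpha lam w D u du hp hR hw hwpos hw0 hu hupos hlc).
    assert (Hpow := ratio_pow_le p R0 alpha lam w D u du hp hR hw hwpos hw0 hu hupos hlc).
    split; intros Ha; split.
    + intros s t Hs Ht. generalize (Hratio 1 ltac:(lra) s t Hs Ht). lra.
    + intros t Ht. rewrite <- (Rabs_right alpha) by lra. apply (Hpow 1); auto; lra.
    + intros s t Hs Ht. generalize (Hratio (-1) ltac:(lra) s t Hs Ht). lra.
    + intros t Ht. rewrite <- (Rabs_left alpha) by lra. apply (Hpow (-1)); auto; lra.
Qed.
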